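(* The sequential fan $S_\omega$ is not $L$-selective.
   Context: For spaces $Y$, $X$, a map $\varphi:Y\to\mathcal P(X)\setminus\{\emptyset\}$ is lower semicontinuous (l.s.c.) if $\{y:\varphi(y)\cap U\neq\emptyset\}$ is open in $Y$ for every open $U\subseteq X$; a selection is a map $f:Y\to X$ with $f(y)\in\varphi(y)$ for all $y$. $X$ is $Y$-selective if every l.s.c. map from $Y$ to the nonempty closed subsets of $X$ has a continuous selection; $L$-selective means $(\omega+1)$-selective, with $\omega+1$ carrying the order topology. The sequential fan $S_\omega$ is the quotient of the topological sum of countably many convergent sequences (with limits) obtained by identifying all limit points. *)

Definition closed_in {X : Type} (openX : (X -> Prop) -> Prop) (A : X -> Prop) : Prop :=
  openX (fun x => ~ A x).

Definition continuous_map {Y X : Type} (openY : (Y -> Prop) -> Prop)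
  (openX : (X -> Prop) -> Prop) (f : Y -> X) : Prop :=
  forall U, openX U -> openY (fun y => U (f y)).

(** phi : Y -> P(X) (represented as a relation); lower semicontinuity:
    {y | phi y meets U} is open for every open U. *)
Definition lsc {Y X : Type} (openY : (Y -> Prop) -> Prop)
  (openX : (X -> Prop) -> Prop) (phi : Y -> X -> Prop) : Prop :=
  forall U, openX U -> openY (fun y => exists x, phi y x /\ U x).

Definition selective {Y X : Type} (openY : (Y -> Prop) -> Prop)
  (openX : (X -> Prop) -> Prop) : Prop :=
  forall phi : Y -> X -> Prop,
    (forall y, exists x, phi y x) ->
    (forall y, closed_in openX (phi y)) ->
    lsc openY openX phi ->
    exists f : Y -> X, continuous_map openY openX f /\ forall y, phi y (f y).

(** omega+1 with the order topology: Some n = n, None = omega.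
    A set is open iff, whenever it contains omega, it contains a tail [N, omega). *)
Definition omega1 := option nat.

Definition omega1_open (U : omega1 -> Prop) : Prop :=
  U None -> exists N : nat, forall n, N <= n -> U (Some n).

Definition L_selective {X : Type} (openX : (X -> Prop) -> Prop) : Prop :=
  selective omega1_open openX.

(** Topological sum of countably many convergent sequences (with limits):
    the point (i, x) is x in the i-th copy of omega+1. *)
Definition sum_space := (nat * omega1)%type.

Definition sum_open (U : sum_space -> Prop) : Prop :=
  forall i : nat, omega1_open (fun x => U (i, x)).

(** The sequential fan: the quotient identifying all limit points (i, None).
    Carrier: None = the identified limit point, Some (i, n) = n-th point of
    the i-th sequence. *)
Definition fan := option (nat * nat).

Definition fan_quot (p : sum_space) : fan :=
  match p with
  | (i, None) => None
  | (i, Some n) => Some (i, n)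
  end.

Definition fan_open (U : fan -> Prop) : Prop :=
  sum_open (fun p => U (fan_quot p)).

(** The counterexample is the l.s.c. map [spine_pair] sending [omega] to the
    vertex of the fan and the point coding [(M, j)] to the two-point set
    {M-th point of spine 0, j-th point of spine M+1}.  Lower semicontinuity
    holds because a neighbourhood of the vertex contains a tail of every
    spine: beyond [N], spine 0 already meets it, and the finitely many
    spines 1..N each meet it from some index on.  A continuous selection [f]
    must send [omega] to the vertex, and by continuity at [omega] (with the
    open complement of a point of spine 0) it eventually picks the point of
    spine M+1 along each column [M].  Letting [J M] be the first index from
    which this happens, the set consisting of the vertex, spine 0 and the
    points [j > J M] of each spine M+1 is open, yet the selection misses it
    at [(M, J M)] for every [M], contradicting continuity at [omega]. *)

From Stdlib Require Import Arith Lia Cantor.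

Definition eventually (P : nat -> Prop) : Prop :=
  exists N, forall n, N <= n -> P n.

Lemma eventually_mono (P Q : nat -> Prop) :
  (forall n, P n -> Q n) -> eventually P -> eventually Q.
Proof. intros PQ [N HN]; exists N; auto. Qed.

Lemma eventually_forall_lt (K : nat) (P : nat -> nat -> Prop) :
  (forall M, M < K -> eventually (P M)) ->
  eventually (fun n => forall M, M < K -> P M n).
Proof.
  induction K as [|K IHK]; intros HP.
  - exists 0; intros n _ M HM; lia.
  - destruct IHK as [N1 HN1]; [intros M HM; apply HP; lia|].
    destruct (HP K (Nat.lt_succ_diag_r K)) as [N2 HN2].
    exists (Nat.max N1 N2); intros n Hn M HM.
    destruct (Nat.eq_dec M K) as [->|HMK]; [apply HN2 | apply HN1]; lia.
Qed.

Lemma well_founded_no_descent (A : Type) (R : A -> A -> Prop) (P : A -> Prop) :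
  well_founded R -> (forall x, P x -> exists y, R y x /\ P y) -> forall x, ~ P x.
Proof.
  intros wfR descent x; induction x as [x IHx] using (well_founded_ind wfR).
  intros Px; destruct (descent x Px) as [y [Ryx Py]]; exact (IHx y Ryx Py).
Qed.

Lemma to_nat_lt_diagonal (x y s : nat) : y + x < s -> to_nat (x, y) < to_nat (0, s).
Proof.
  intros Hs.
  pose proof (to_nat_spec x y); pose proof (to_nat_spec 0 s).
  rewrite Nat.add_0_r in *; nia.
Qed.

Lemma eventually_to_nat (M : nat) (P : nat -> Prop) :
  eventually P -> eventually (fun j => P (to_nat (M, j))).
Proof.
  intros [N HN]; exists N; intros j Hj.
  apply HN; pose proof (to_nat_non_decreasing M j); lia.
Qed.

Lemma eventually_of_nat (K : nat) (P : nat -> nat -> Prop) :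
  (forall M, M < K -> eventually (P M)) ->
  eventually (fun n => forall M j, of_nat n = (M, j) -> M < K -> P M j).
Proof.
  intros HP; destruct (eventually_forall_lt K P HP) as [N HN].
  exists (to_nat (0, K + N)); intros n Hn M j Hnj HM.
  apply HN; [|exact HM].
  destruct (Nat.le_gt_cases N j); [assumption|].
  assert (Hdiag : to_nat (M, j) < to_nat (0, K + N)) by (apply to_nat_lt_diagonal; lia).
  rewrite <- Hnj, cancel_to_of in Hdiag; lia.
Qed.

Lemma fan_openE (U : fan -> Prop) :
  fan_open U <-> (U None -> forall i, eventually (fun n => U (Some (i, n)))).
Proof. split; [intros HU HUv i; exact (HU i HUv) | intros HU i HUv; exact (HU HUv i)]. Qed.

Lemma fan_closed_away_from_vertex (A : fan -> Prop) :
  ~ A None -> (forall i, eventually (fun n => ~ A (Some (i, n)))) -> closed_in fan_open A.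
Proof. intros HA Hspine; apply fan_openE; auto. Qed.

Lemma continuous_at_omega (f : omega1 -> fan) (U : fan -> Prop) :
  continuous_map omega1_open fan_open f -> fan_open U -> U (f None) ->
  eventually (fun n => U (f (Some n))).
Proof. intros Hf HU; exact (Hf U HU). Qed.

Definition spine_pair (y : omega1) (x : fan) : Prop :=
  match y with
  | None => x = None
  | Some n => let (M, j) := of_nat n in x = Some (0, M) \/ x = Some (S M, j)
  end.

Lemma spine_pair_to_nat (M j : nat) (x : fan) :
  spine_pair (Some (to_nat (M, j))) x <-> x = Some (0, M) \/ x = Some (S M, j).
Proof. unfold spine_pair; rewrite cancel_of_to; reflexivity. Qed.

Lemma spine_pair_nonempty (y : omega1) : exists x, spine_pair y x.
Proof.
  destruct y as [n|]; simpl; [destruct (of_nat n) as [M j]|]; eauto.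
Qed.

Lemma spine_pair_closed (y : omega1) : closed_in fan_open (spine_pair y).
Proof.
  destruct y as [n|]; [|intros i Hv; exfalso; apply Hv; reflexivity].
  unfold spine_pair; destruct (of_nat n) as [M j].
  apply fan_closed_away_from_vertex; [intros [H|H]; discriminate|].
  intros i; exists (S (M + j)); intros m Hm [H|H]; injection H; lia.
Qed.

Lemma spine_pair_lsc : lsc omega1_open fan_open spine_pair.
Proof.
  intros U HU [x [-> HUv]].
  pose proof (proj1 (fan_openE U) HU HUv) as Htail.
  destruct (Htail 0) as [K HK].
  apply (eventually_mono (fun n => forall M j, of_nat n = (M, j) -> M < K -> U (Some (S M, j)))).
  - intros n Hn; simpl; destruct (of_nat n) as [M j] eqn:Hnj.
    destruct (Nat.lt_ge_cases M K) as [HM|HM].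
    + exists (Some (S M, j)); auto.
    + exists (Some (0, M)); auto.
  - apply eventually_of_nat; intros M _; apply Htail.
Qed.

Section NoContinuousSelection.

Variable f : omega1 -> fan.
Hypothesis f_continuous : continuous_map omega1_open fan_open f.
Hypothesis f_selection : forall y, spine_pair y (f y).

Definition leaves_spine0_from (M j0 : nat) : Prop :=
  forall j, j0 <= j -> f (Some (to_nat (M, j))) <> Some (0, M).

Lemma selection_leaves_spine0 (M : nat) : exists j0, leaves_spine0_from M j0.
Proof.
  assert (Hopen : fan_open (fun x => x <> Some (0, M))).
  { apply fan_openE; intros _ i; exists (S M); intros n Hn H; injection H; lia. }
  assert (Hvertex : f None <> Some (0, M)) by (rewrite (f_selection None); discriminate).
  destruct (eventually_to_nat M _ (continuous_at_omega f _ f_continuous Hopen Hvertex))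
    as [j0 Hj0].
  exists j0; exact Hj0.
Qed.

Definition late_points (x : fan) : Prop :=
  match x with
  | Some (S M, j) => exists j0, j0 < j /\ leaves_spine0_from M j0
  | _ => True
  end.

Lemma late_points_open : fan_open late_points.
Proof.
  apply fan_openE; intros _ [|M]; [exists 0; simpl; auto|].
  destruct (selection_leaves_spine0 M) as [j0 Hj0].
  exists (S j0); intros j Hj; exists j0; split; [lia | exact Hj0].
Qed.

Lemma selection_not_continuous : False.
Proof.
  assert (Hvertex : late_points (f None)) by (rewrite (f_selection None); exact I).
  destruct (continuous_at_omega f _ f_continuous late_points_open Hvertex) as [N HN].
  assert (Hlate : forall j, late_points (f (Some (to_nat (N, j))))).
  { intros j; apply HN; pose proof (to_nat_non_decreasing N j); lia. }
  destruct (selection_leaves_spine0 N) as [j0 Hj0].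
  apply (well_founded_no_descent nat lt (leaves_spine0_from N) lt_wf) with j0; [|exact Hj0].
  intros j Hj.
  specialize (Hlate j).
  destruct (proj1 (spine_pair_to_nat N j _) (f_selection _)) as [Hf|Hf].
  - exfalso; exact (Hj j (Nat.le_refl j) Hf).
  - rewrite Hf in Hlate; exact Hlate.
Qed.

End NoContinuousSelection.

Theorem mainTheorem17 : ~ L_selective fan_open.
Proof.
  intros HL.
  destruct (HL spine_pair spine_pair_nonempty spine_pair_closed spine_pair_lsc)
    as [f [Hf_cont Hf_sel]].
  exact (selection_not_continuous f Hf_cont Hf_sel).
Qed.
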